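(* The Max-Egal objective is weak-proof against a manipulator $m^+$ (one who can only add edges) over undirected networks. That is, for every $k$, every undirected social network $G$, every agent $m$ and every manipulation in which $m$ adds edges incident to $m$ (yielding $G^m$), it is not the case that both \[\min_{P\in O(G^m)} u(m,P)>\min_{P\in O(G)} u(m,P)\quad\text{and}\quad \max_{P\in O(G^m)} u(m,P)>\max_{P\in O(G)} u(m,P),\] where $O(\cdot)$ denotes the set of Max-Egal solutions and $u(m,P)$ is computed in the true network $G$.
   Context: Let $A=\{a_1,\dots,a_n\}$ be a finite nonempty set of agents and $G=\langle A,E\rangle$ an undirected graph without self-loops (the social network). $N(a)$ is the set of neighbours of $a$ in $G$. For a coalition $C\subseteq A$ with $a\in C$, $u(a,C)=|C\cap N(a)|$. For $0<k\le n$, $\Pi_k$ is the set of partitions of $A$ into exactly $k$ nonempty coalitions; for $P\in\Pi_k$, $u(a,P)=u(a,C)$ where $C\in P$ contains $a$. The Max-Egal objective: $O(G)$ is the set of $P\in\Pi_k$ maximizing $\min_{a\in A}u(a,P)$ (utilities computed in the network in question). A manipulator $m$ of type $m^+$ in an undirected network may add any set of new edges $\{m,a\}$ (non-edges of $G$); the resulting reported network is $G^m$. The utility $u(m,P)$ of the manipulator is always computed with respect to his true neighbours in the original $G$. *)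

From mathcomp Require Import all_boot.
Set Implicit Arguments. Unset Strict Implicit. Unset Printing Implicit Defensive.

Section Defs.
Variable T : finType.

Definition undirected (e : rel T) : Prop :=
  (forall a b, e a b = e b a) /\ (forall a, ~~ e a a).

Definition nbhd (e : rel T) (a : T) : {set T} := [set b | e a b].

(* Pi_k : partitions of A into exactly k nonempty coalitions
   (finset's [partition] already requires set0 \notin P). *)
Definition Pi (k : nat) : {set {set {set T}}} :=
  [set P : {set {set T}} | partition P [set: T] && (#|P| == k)].

Definition util (e : rel T) (a : T) (P : {set {set T}}) : nat :=
  #|pblock P a :&: nbhd e a|.

(* min_a u(a,P); #|T| is a neutral upper bound since utilities are < #|T|. *)
Definition egal (e : rel T) (P : {set {set T}}) : nat :=
  \big[minn/#|T|]_(a : T) util e a P.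

Definition MaxEgal (e : rel T) (k : nat) : {set {set {set T}}} :=
  [set P in Pi k | [forall Q in Pi k, egal e Q <= egal e P]].

(* min / max over a (nonempty) set of partitions of the true utility of m;
   #|T| is a neutral upper bound for minn since utilities are < #|T|. *)
Definition minU (e : rel T) (m : T) (S : {set {set {set T}}}) : nat :=
  \big[minn/#|T|]_(P in S) util e m P.
Definition maxU (e : rel T) (m : T) (S : {set {set {set T}}}) : nat :=
  \max_(P in S) util e m P.

Definition plus_manip (e em : rel T) (m : T) : Prop :=
  undirected em /\ (forall a b, e a b -> em a b) /\
  (forall a b, em a b -> e a b || (a == m) || (b == m)).
End Defs.

(** Let [v] and [v'] be the optimal egalitarian values of [G] and [G^m].
    Adding edges never lowers a utility, so if [v' <= v] every optimal
    partition of [G] is still optimal in [G^m], and the worst outcome for [m]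
    cannot improve.  If [v < v'], take [P'] optimal in [G^m] and better for
    [m] than every optimal partition of [G].  Back in [G] every agent other
    than [m] loses at most the neighbour [m], so keeps utility [>= v' - 1 >= v].
    Hence either [m] gets at least [v] in [P'], which makes [P'] optimal in
    [G], or [m] gets less than [v], which it gets in every optimal partition
    of [G]; both contradict the choice of [P']. *)

From mathcomp Require Import all_boot order.
Import Order.TTheory.

Set Implicit Arguments.
Unset Strict Implicit.
Unset Printing Implicit Defensive.

Lemma bigmax_gtn_witness (I : finType) (A : {pred I}) (F : I -> nat) n :
  n < \max_(i in A) F i -> exists2 i, i \in A & n < F i.
Proof.
move=> lt_n; have [|i Ai maxE] := eq_bigmax_cond F (A := A).
  by rewrite lt0n; apply: contraTneq lt_n => /card0_eq A0; rewrite big_pred0.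
by exists i => //; rewrite -maxE.
Qed.

Section Utilities.
Variable T : finType.
Implicit Types (e em : rel T) (P : {set {set T}}) (S : {set {set {set T}}}).

Lemma egal_le_util e P a : egal e P <= util e a P.
Proof. rewrite /egal -minEnat -leEnat; exact: bigmin_le. Qed.

Lemma egal_le_card e P : egal e P <= #|T|.
Proof. rewrite /egal -minEnat -leEnat; exact: bigmin_le_id. Qed.

Lemma leq_egal e P v : v <= #|T| -> (forall a, v <= util e a P) -> v <= egal e P.
Proof.
rewrite /egal -minEnat -leEnat => le_v_card le_v_util.
by apply: le_bigmin => // a _; apply: le_v_util.
Qed.

Lemma util_subrel e em P a : subrel e em -> util e a P <= util em a P.
Proof.
move=> e_em; apply/subset_leq_card/subsetP => b; rewrite !inE.
by case/andP=> -> /e_em.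
Qed.

Lemma egal_subrel e em P : subrel e em -> egal e P <= egal em P.
Proof.
move=> e_em; apply: leq_egal (egal_le_card e P) _ => a.
exact: leq_trans (egal_le_util e P a) (util_subrel P a e_em).
Qed.

Lemma minU_subset e m S S' : S \subset S' -> minU e m S' <= minU e m S.
Proof.
move=> /subsetP sub; rewrite /minU -minEnat -leEnat.
apply: le_bigmin => [|P SP]; first exact: bigmin_le_id.
exact/bigmin_le_cond/sub.
Qed.

Lemma maxU_ge e m S P : P \in S -> util e m P <= maxU e m S.
Proof. exact: leq_bigmax_cond. Qed.

Lemma maxU_gt_witness e m S n :
  n < maxU e m S -> exists2 P, P \in S & n < util e m P.
Proof. exact: bigmax_gtn_witness. Qed.

End Utilities.

Section MaxEgalSolutions.
Variables (T : finType) (k : nat) (e : rel T).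
Implicit Types (P Q : {set {set T}}).

Lemma MaxEgal_Pi P : P \in MaxEgal e k -> P \in Pi T k.
Proof. by rewrite inE => /andP[]. Qed.

Lemma MaxEgal_exists Q : Q \in Pi T k -> exists P, P \in MaxEgal e k.
Proof.
move=> PiQ; exists [arg max_(P > Q in Pi T k) egal e P].
by case: arg_maxnP => // P PiP Pmax; rewrite inE PiP; apply/forall_inP.
Qed.

Lemma mem_MaxEgal P0 P : P0 \in MaxEgal e k ->
  (P \in MaxEgal e k) = (P \in Pi T k) && (egal e P0 <= egal e P).
Proof.
rewrite 2![_ \in MaxEgal _ _]inE => /andP[PiP0 /forall_inP P0max].
apply/andP/andP => -[PiP Pmax]; split=> //.
  exact: (forall_inP Pmax).
by apply/forall_inP => Q /P0max /leq_trans; apply.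
Qed.

End MaxEgalSolutions.

Section EdgeAddition.
Variables (T : finType) (e em : rel T) (m : T).
Hypothesis e_em : subrel e em.
Hypothesis em_at_m : forall a b, em a b -> e a b || (a == m) || (b == m).
Implicit Types (P : {set {set T}}).

Lemma util_add_edges a P : a != m -> util em a P <= (util e a P).+1.
Proof.
move=> a_m; apply: leq_trans (_ : #|m |: (pblock P a :&: nbhd e a)| <= _).
  apply/subset_leq_card/subsetP => b; rewrite !inE => /andP[-> /em_at_m].
  by rewrite (negbTE a_m) orbF orbC.
by rewrite cardsU1; case: (m \in _).
Qed.

Lemma egal_add_edges P : minn (util e m P) (egal em P).-1 <= egal e P.
Proof.
apply: leq_egal => [|a].
  by rewrite geq_min (leq_trans (leq_pred _) (egal_le_card em P)) orbT.
have [->|a_m] := eqVneq a m; first exact: geq_minl.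
rewrite geq_min -subn1 leq_subLR add1n orbC.
by rewrite (leq_trans (egal_le_util em P a) (util_add_edges P a_m)).
Qed.

Lemma MaxEgal_subset_add_edges k P0 P' :
  P0 \in MaxEgal e k -> P' \in MaxEgal em k -> egal em P' <= egal e P0 ->
  MaxEgal e k \subset MaxEgal em k.
Proof.
move=> P0opt P'opt le_v'_v; apply/subsetP => P Popt.
rewrite (mem_MaxEgal P P'opt) (MaxEgal_Pi Popt) /=.
move: Popt; rewrite (mem_MaxEgal P P0opt) => /andP[_ le_v_P].
exact: leq_trans le_v'_v (leq_trans le_v_P (egal_subrel P e_em)).
Qed.

Lemma MaxEgal_add_edges_back k P0 P' : P0 \in MaxEgal e k -> P' \in Pi T k ->
  egal e P0 < egal em P' -> egal e P0 <= util e m P' -> P' \in MaxEgal e k.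
Proof.
move=> P0opt PiP' lt_v_v' le_v_um; rewrite (mem_MaxEgal P' P0opt) PiP' /=.
apply: leq_trans (egal_add_edges P'); rewrite leq_min le_v_um /=.
by rewrite -ltnS (ltn_predK lt_v_v').
Qed.

End EdgeAddition.

Theorem theorem1 (T : finType) (k : nat) (e em : rel T) (m : T) :
  0 < k <= #|T| ->
  undirected e ->
  plus_manip e em m ->
  ~ ( minU e m (MaxEgal em k) > minU e m (MaxEgal e k) /\
      maxU e m (MaxEgal em k) > maxU e m (MaxEgal e k) ).
Proof.
move=> _ _ [_ [e_em em_at_m]] [min_gt max_gt].
have [P' P'opt lt_maxU_P'] := maxU_gt_witness max_gt.
have PiP' := MaxEgal_Pi P'opt.
have [P0 P0opt] := MaxEgal_exists e PiP'.
have [le_v'_v | lt_v_v'] := leqP (egal em P') (egal e P0).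
  have := minU_subset e m (MaxEgal_subset_add_edges e_em P0opt P'opt le_v'_v).
  by rewrite leqNgt min_gt.
have [le_v_uP' | lt_uP'_v] := leqP (egal e P0) (util e m P').
  have P'optG := MaxEgal_add_edges_back em_at_m P0opt PiP' lt_v_v' le_v_uP'.
  by have := maxU_ge e m P'optG; rewrite leqNgt lt_maxU_P'.
have le_v_maxU := leq_trans (egal_le_util e P0 m) (maxU_ge e m P0opt).
by have := leq_ltn_trans le_v_maxU lt_maxU_P'; rewrite ltnNge (ltnW lt_uP'_v).
Qed.
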